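(* Let $h^*:\omega\to\omega\setminus\{0\}$ and $H^*(n)=2^{h^*(n)}$. Let $\mathcal H\subseteq\omega^\omega$ be a dominating family and let $\bar\nu=\langle\nu^h:h\in\mathcal H\rangle$ have index $\mathcal H$. Let $\dot g^*$ be the name of the generic function added by $PT_{H^*}$. Then $\Vdash_{PT_{H^*}}$ ''there is $h\in\mathcal H$ with $\bigcup_{k\in\omega}[\nu^h(k)]\subseteq\bigcup_{n\in\omega}[\dot g^*(n)]$''.
   Context: $2^k$ is the set of binary sequences of length $k$ and $[\eta]=\{f\in2^\omega:\eta\subseteq f\}$. $\mathcal H\subseteq\omega^\omega$ is dominating if every $f\in\omega^\omega$ satisfies $f(n)<h(n)$ for all $n$ for some $h\in\mathcal H$. $\bar\nu$ has index $\mathcal H$ if each $\nu^h$ has domain $\omega$ and $\nu^h(n)\in2^{h(n)}$. For $H$ with domain $\omega$ and each $H(n)$ finite with at least two elements, $PT_H$ is the set of all $p$ such that (A) $p$ is a nonempty set of finite sequences closed under initial segments; (B) $\eta(l)\in H(l)$ for $\eta\in p$, $l<|\eta|$; (C) for $\eta\in p$, $\{i:\eta^\frown i\in p\}$ is a singleton or equals $H(|\eta|)$; (D) every $\eta\in p$ has an extension $\nu\in p$ with $\{i:\nu^\frown i\in p\}=H(|\nu|)$; $q$ is stronger than $p$ iff $q\subseteq p$. The generic function $g$ added by $PT_H$ is the function with domain $\omega$ such that $g\restriction n\in p$ for all $n$ and all $p$ in the generic filter. *)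

From mathcomp Require Import all_boot.
Set Implicit Arguments. Unset Strict Implicit. Unset Printing Implicit Defensive.

(* A binary sequence eta (element of 2^k, k = size eta) and [eta] as a
   predicate on 2^omega : x \in [eta] iff eta is an initial segment of x. *)
Definition in_cyl (eta : seq bool) (x : nat -> bool) : Prop :=
  forall i, i < size eta -> x i = nth false eta i.

(* H^*(n) = 2^{h^*(n)} : binary sequences of length h^*(n). *)
Definition Hstar (hs : nat -> nat) (n : nat) (s : seq bool) : Prop :=
  size s = hs n.

Definition dominating (Hf : (nat -> nat) -> Prop) : Prop :=
  forall f : nat -> nat, exists h, Hf h /\ forall n, f n < h n.

Definition has_index (Hf : (nat -> nat) -> Prop)
  (nu : (nat -> nat) -> nat -> seq bool) : Prop :=
  forall h, Hf h -> forall n, size (nu h n) = h n.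

Definition PT (H : nat -> seq bool -> Prop) (p : seq (seq bool) -> Prop) : Prop :=
  (exists eta, p eta) /\
  (forall eta n, p eta -> p (take n eta)) /\
  (forall eta, p eta -> forall l, l < size eta -> H l (nth [::] eta l)) /\
  (forall eta, p eta ->
     (exists i, forall j, p (rcons eta j) <-> j = i) \/
     (forall j, p (rcons eta j) <-> H (size eta) j)) /\
  (forall eta, p eta -> exists nu, prefix eta nu /\ p nu /\
     forall j, p (rcons nu j) <-> H (size nu) j).

Definition PT_le (H : nat -> seq bool -> Prop) (q p : seq (seq bool) -> Prop) : Prop :=
  PT H q /\ forall eta, q eta -> p eta.

(* branches of a tree: the possible values of the generic function g *)
Definition body (p : seq (seq bool) -> Prop) (g : nat -> seq bool) : Prop :=
  forall n, p (mkseq g n).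

(* Forcing relation for a statement "g \in O" with O an OPEN set of values of
   the generic g (open in the product topology): p forces it iff the set of
   conditions s all of whose branches lie in O is dense below p. *)
Definition forces_open (H : nat -> seq bool -> Prop) (p : seq (seq bool) -> Prop)
  (O : (nat -> seq bool) -> Prop) : Prop :=
  forall r, PT_le H r p -> exists s, PT_le H s r /\ forall g, body s g -> O g.

(* The statement  [nu^h(k)] \subseteq \bigcup_n [g(n)]  (open in g). *)
Definition cyl_covered (eta : seq bool) (g : nat -> seq bool) : Prop :=
  forall x : nat -> bool, in_cyl eta x -> exists n, in_cyl (g n) x.

From mathcomp Require Import all_boot.
From Stdlib Require Import ClassicalEpsilon.
Set Implicit Arguments. Unset Strict Implicit. Unset Printing Implicit Defensive.

(* Count, for each node e of a PT_{H*}-tree p, the splitting nodes of p strictly below e.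
   Pruning p at every splitting node of odd count 2k+1 down to the single successor
   "nu^h(k) truncated to length h*(|e|)" leaves a PT-subtree q, since splitting nodes of
   even count keep all their successors. Every branch g of q passes through such a node
   e = g|n, and there g(n) is an initial segment of nu^h(k), so [nu^h(k)] is contained in
   [g(n)]. The truncation is possible because, by finite branching, all nodes of length
   at least N(m) have count at least m, so it suffices that h dominates
   k |-> max_{i < N(2k+2)} h*(i). *)

Section PrefixCount.
Variables (T : Type) (P : pred (seq T)).

Definition prefix_count (s : seq T) : nat :=
  count (fun i => P (take i s)) (iota 0 (size s)).

Lemma prefix_count_rcons s x : prefix_count (rcons s x) = prefix_count s + P s.
Proof.
rewrite /prefix_count size_rcons -addn1 iotaD count_cat /= addn0 add0n -cats1.
rewrite take_size_cat //; congr (_ + _); apply: eq_in_count => i.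
by rewrite mem_iota add0n => /andP[_ /ltnW le]; rewrite takel_cat.
Qed.

Lemma prefix_count_cat s t : (forall i, i < size t -> ~~ P (s ++ take i t)) ->
  prefix_count (s ++ t) = prefix_count s.
Proof.
elim/last_ind: t => [|t x IH] noP; first by rewrite cats0.
rewrite -rcons_cat prefix_count_rcons IH => [|i lt].
  have := noP (size t); rewrite size_rcons ltnSn -cats1 take_size_cat //.
  by move/(_ isT)/negbTE ->; rewrite addn0.
have := noP i; rewrite size_rcons ltnS (ltnW lt) -cats1 takel_cat ?(ltnW lt) //.
by move/(_ isT).
Qed.

Lemma leq_prefix_count_cat s t : prefix_count s <= prefix_count (s ++ t).
Proof.
elim/last_ind: t => [|t x IH]; first by rewrite cats0.
by rewrite -rcons_cat prefix_count_rcons (leq_trans IH) ?leq_addr.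
Qed.

End PrefixCount.

Lemma bit_increments_hit (a : nat -> nat) (b : nat -> bool) m :
  a 0 = 0 -> (forall n, a n.+1 = a n + b n) -> (exists n, m < a n) ->
  exists n, b n /\ a n = m.
Proof.
move=> a0 aS exn; case: (ex_minnP exn) => [[|n]]; first by rewrite a0.
rewrite aS => lt min; have le : a n <= m by rewrite leqNgt; apply/negP => /min; rewrite ltnn.
exists n; case: (b n) lt => /=; last by rewrite addn0 ltnNge le.
by rewrite addn1 ltnS => ge; split => //; apply/eqP; rewrite eqn_leq le.
Qed.

Lemma uniform_bound_in (T : eqType) (Q : T -> nat -> Prop) (s : seq T) :
  (forall x N N', N <= N' -> Q x N -> Q x N') ->
  (forall x, x \in s -> exists N, Q x N) -> exists N, forall x, x \in s -> Q x N.
Proof.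
move=> monoQ; elim: s => [|y s IH] exQ; first by exists 0.
have [Ny Hy] := exQ y (mem_head y s).
have [Ns Hs] := IH (fun x xs => exQ x (mem_behead (s := y :: s) xs)).
exists (maxn Ny Ns) => x; rewrite inE => /orP[/eqP ->|xs].
  by apply: monoQ Hy; rewrite leq_maxl.
by apply: monoQ (Hs x xs); rewrite leq_maxr.
Qed.

Section SplittingNodes.
Variables (H : nat -> seq bool -> Prop) (p : seq (seq bool) -> Prop).
Hypothesis p_PT : PT H p.

Definition splitting (e : seq (seq bool)) : Prop :=
  forall j, p (rcons e j) <-> H (size e) j.

Definition splittingb e : bool :=
  if excluded_middle_informative (splitting e) then true else false.

Lemma splittingP e : reflect (splitting e) (splittingb e).
Proof. by rewrite /splittingb; case: excluded_middle_informative => s; constructor. Qed.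

Definition split_count : seq (seq bool) -> nat := prefix_count splittingb.

Lemma PT_nil : p [::].
Proof. by case: p_PT => [[e pe] [p_take _]]; rewrite -(take0 e); apply: p_take. Qed.

Lemma PT_take e n : p e -> p (take n e).
Proof. by case: p_PT => _ [p_take _]; apply: p_take. Qed.

Lemma PT_rcons e j : p (rcons e j) -> p e.
Proof. by move/(PT_take (size e)); rewrite -cats1 take_size_cat. Qed.

Lemma PT_cat_take e t n : p (e ++ t) -> p (e ++ take n t).
Proof. by move/(PT_take (size e + n)); rewrite takeD take_size_cat ?drop_size_cat. Qed.

Lemma nonsplitting_succ_uniq e a b :
  p e -> ~ splitting e -> p (rcons e a) -> p (rcons e b) -> a = b.
Proof.
case: p_PT => _ [_ [_ [p_succ _]]] pe.
by have [[i Hi] _ /Hi -> /Hi ->|full /(_ full)] := p_succ e pe.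
Qed.

Lemma nonsplitting_path e t u :
  p (e ++ t) -> (forall i, i < size t -> ~ splitting (e ++ take i t)) ->
  p (e ++ u) -> size t <= size u -> take (size t) u = t.
Proof.
elim/last_ind: t => [|t x IH] pt nospl pu; first by rewrite take0.
rewrite size_rcons => lt; have le := ltnW lt.
have tu : take (size t) u = t.
  apply: IH => // [|i lti]; first by move: pt; rewrite -rcons_cat; apply: PT_rcons.
  have := nospl i; rewrite size_rcons ltnS (ltnW lti) -cats1 takel_cat ?(ltnW lti) //.
  by move/(_ isT).
have p_t : p (e ++ t) by move: pt; rewrite -rcons_cat; apply: PT_rcons.
have nospl_t : ~ splitting (e ++ t).
  by have := nospl (size t); rewrite size_rcons ltnSn -cats1 take_size_cat //; move/(_ isT).
have := PT_cat_take (size t).+1 pu; rewrite (take_nth [::] lt) tu -rcons_cat => pu'.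
congr rcons.
by apply: nonsplitting_succ_uniq p_t nospl_t pu' _; rewrite rcons_cat.
Qed.

Lemma next_splitting e : p e -> exists t,
  [/\ p (e ++ t), splitting (e ++ t), split_count (e ++ t) = split_count e
    & forall i, i < size t -> ~ splitting (e ++ take i t)].
Proof.
case: p_PT => _ [_ [_ [_ p_dense]]] pe.
have [_ [/prefixP[t' ->] [pt' spl']]] := p_dense e pe.
pose P i := (i <= size t') && splittingb (e ++ take i t').
have [|m /andP[m_le /splittingP spl_m] m_min] := ex_minnP (P := P).
  by exists (size t'); rewrite /P leqnn take_size; exact/splittingP.
have nospl i : i < m -> ~ splitting (e ++ take i (take m t')).
  move=> lt /splittingP spl_i; suff /m_min : P i by rewrite leqNgt lt.
  by rewrite /P (leq_trans (ltnW lt) m_le) -(take_takel _ (ltnW lt)).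
have size_tm : size (take m t') = m by rewrite size_takel.
exists (take m t'); split => //; first exact: PT_cat_take.
  apply: prefix_count_cat => i; rewrite size_tm => /nospl.
  by apply: contra_notN => /splittingP.
by move=> i; rewrite size_tm; apply: nospl.
Qed.

Hypothesis H_fin : forall n, exists s : seq (seq bool), forall j, H n j -> j \in s.

Lemma split_count_grows m e : p e -> exists N, forall t,
  p (e ++ t) -> N <= size t -> split_count e + m <= split_count (e ++ t).
Proof.
elim: m e => [|m IH] e pe.
  by exists 0 => t _ _; rewrite addn0 leq_prefix_count_cat.
have [t0 [pv0 spl0 cnt0 nospl0]] := next_splitting pe.
set v0 := e ++ t0 in pv0 spl0 cnt0.
have [s Hs] := H_fin (size v0).
have [||N HN] := uniform_bound_in (s := s) (Q := fun j N => forall t,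
    p (rcons v0 j ++ t) -> N <= size t ->
    split_count (rcons v0 j) + m <= split_count (rcons v0 j ++ t)).
- by move=> j N N' le HQ t pt /(leq_trans le); apply: HQ.
- move=> j _; case: (excluded_middle_informative (p (rcons v0 j))) => [/IH //|pj].
  by exists 0 => t /(PT_take (size (rcons v0 j))); rewrite take_size_cat // => /pj.
exists ((size t0).+1 + N) => t pt big.
have tt0 : take (size t0) t = t0.
  apply: (nonsplitting_path pv0 nospl0 pt); apply: leq_trans big.
  by rewrite addSn ltnW // ltnS leq_addr.
move: pt big; rewrite -(cat_take_drop (size t0) t) tt0 size_cat.
case: (drop (size t0) t) => [|j t'']; first by rewrite addn0 addSn ltnNge leq_addr.
rewrite /= addSn addnS ltnS leq_add2l catA -cat_rcons => pt big.
have Hj : j \in s.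
  by apply/Hs/spl0; move/(PT_take (size (rcons v0 j))): pt; rewrite take_size_cat.
apply: leq_trans (HN j Hj t'' pt big).
rewrite /split_count prefix_count_rcons -/(split_count v0) cnt0.
by rewrite (introT (splittingP _) spl0) -addnA add1n addnS.
Qed.

Lemma split_count_unbounded : exists N : nat -> nat,
  forall m t, p t -> N m <= size t -> m <= split_count t.
Proof.
apply: (choice (fun m N => forall t, p t -> N <= size t -> m <= split_count t)) => m.
by have [N HN] := split_count_grows m PT_nil; exists N; apply: HN.
Qed.

Section Pruning.
Variable code : seq (seq bool) -> seq bool.
Hypothesis code_ok : forall z, p z -> H (size z) (code z).

Definition prune (e : seq (seq bool)) : Prop :=
  p e /\ forall i, i < size e -> splittingb (take i e) ->
    odd (split_count (take i e)) -> nth [::] e i = code (take i e).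

Lemma prune_take e n : prune e -> prune (take n e).
Proof.
move=> [pe prune_e]; split => [|i]; first exact: PT_take.
rewrite size_take_min leq_min => /andP[lt_n lt_e].
by rewrite take_takel ?(ltnW lt_n) // nth_take //; apply: prune_e.
Qed.

Lemma prune_rcons e j : prune (rcons e j) <->
  [/\ prune e, p (rcons e j) & splittingb e -> odd (split_count e) -> j = code e].
Proof.
have te : take (size e) (rcons e j) = e by rewrite -cats1 take_size_cat.
split.
  move=> pr; split; first by rewrite -te; apply: prune_take.
    by case: pr.
  by case: pr => _ /(_ (size e)); rewrite size_rcons ltnSn te nth_rcons ltnn eqxx; apply.
move=> [[pe prune_e] pj cj]; split => // i; rewrite size_rcons ltnS leq_eqVlt.
case/orP => [/eqP ->|lt]; first by rewrite te nth_rcons ltnn eqxx.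
by rewrite -cats1 takel_cat ?(ltnW lt) // nth_cat lt; apply: prune_e.
Qed.

Lemma prune_next_splitting e : prune e -> exists t,
  [/\ prune (e ++ t), splitting (e ++ t) & split_count (e ++ t) = split_count e].
Proof.
move=> [pe prune_e]; have [t [pt spl cnt nospl]] := next_splitting pe.
exists t; split => //; split => // i; rewrite size_cat.
case: (ltnP i (size e)) => [lt _|le lt].
  by rewrite takel_cat ?(ltnW lt) // nth_cat lt; apply: prune_e.
rewrite -(subnKC le) takeD take_size_cat // drop_size_cat // => /splittingP.
by move/nospl; rewrite -(ltn_add2l (size e)) subnKC.
Qed.

Lemma prune_splitting_even v : prune v -> splitting v -> ~~ odd (split_count v) ->
  forall j, prune (rcons v j) <-> H (size v) j.
Proof.
move=> pv spl even j; rewrite prune_rcons; split; first by case=> _ /spl.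
by move=> Hj; split => //; [apply/spl | move=> _ odd_v; rewrite odd_v in even].
Qed.

Lemma prune_succ e : prune e ->
  (exists i, forall j, prune (rcons e j) <-> j = i) \/
  (forall j, prune (rcons e j) <-> H (size e) j).
Proof.
move=> pe; have [spl|nspl] := splittingP e.
  have [odd_e|] := boolP (odd (split_count e)); last by right; apply: prune_splitting_even.
  left; exists (code e) => j; rewrite prune_rcons.
  split=> [[_ _ ->] //|->]; first exact/splittingP.
  by split=> //; apply/spl/code_ok; case: pe.
case: p_PT => _ [_ [_ [p_succ _]]].
have [[i Hi]|//] := p_succ e (proj1 pe).
left; exists i => j; rewrite prune_rcons.
by split=> [[_ /Hi]|->] //; split=> //; [apply/Hi | move/splittingP].
Qed.

Lemma prune_dense e : prune e -> exists v,
  [/\ prefix e v, prune v & forall j, prune (rcons v j) <-> H (size v) j].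
Proof.
move=> pe; have [t [pv spl cnt]] := prune_next_splitting pe.
have [odd_v|even_v] := boolP (odd (split_count (e ++ t))); last first.
  by exists (e ++ t); split; [apply: prefix_prefix | | apply: prune_splitting_even].
set v := e ++ t in pv spl cnt odd_v.
have pv' : prune (rcons v (code v)).
  by apply/prune_rcons; split=> //; apply/spl/code_ok; case: pv.
have [t' [pv'' spl' cnt']] := prune_next_splitting pv'.
exists (rcons v (code v) ++ t'); split=> //.
  by rewrite rcons_cat -catA prefix_prefix.
apply: prune_splitting_even => //.
by rewrite cnt' /split_count prefix_count_rcons (introT (splittingP _) spl) addn1 /= odd_v.
Qed.

Lemma PT_prune : PT H prune.
Proof.
case: p_PT => _ [_ [p_H _]].
split; first by exists [::]; split => //; exact: PT_nil.
split; first by move=> e n; apply: prune_take.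
split; first by move=> e [pe _]; apply: p_H.
split; first exact: prune_succ.
by move=> e /prune_dense[v [? ? ?]]; exists v.
Qed.

Lemma prune_branch_code g k : body prune g ->
  exists n, g n = code (mkseq g n) /\ split_count (mkseq g n) = k.*2.+1.
Proof.
move=> g_prune; have [N HN] := split_count_unbounded.
have [|||n [spl_n cnt_n]] := bit_increments_hit (m := k.*2.+1)
  (a := fun n => split_count (mkseq g n)) (b := fun n => splittingb (mkseq g n)).
- by [].
- by move=> n; rewrite mkseqS /split_count prefix_count_rcons.
- exists (N k.*2.+2); apply: HN; last by rewrite size_mkseq.
  by case: (g_prune (N k.*2.+2)).
exists n; split=> //; have := g_prune n.+1.
by rewrite mkseqS prune_rcons cnt_n /= odd_double => -[_ _]; apply.
Qed.

End Pruning.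
End SplittingNodes.

Lemma Hstar_finite hs n : exists s : seq (seq bool), forall j, Hstar hs n j -> j \in s.
Proof.
exists [seq val t | t : (hs n).-tuple bool] => j /eqP size_j.
by apply/mapP; exists (Tuple size_j); rewrite ?mem_enum.
Qed.

Lemma in_cyl_take n eta x : n <= size eta -> in_cyl eta x -> in_cyl (take n eta) x.
Proof.
move=> le x_eta i; rewrite size_takel // => lt.
by rewrite nth_take // x_eta // (leq_trans lt le).
Qed.

Theorem fact2p32 (hs : nat -> nat) (hs_pos : forall n, 0 < hs n)
  (Hf : (nat -> nat) -> Prop) (Hdom : dominating Hf)
  (nu : (nat -> nat) -> nat -> seq bool) (Hnu : has_index Hf nu) :
  forall p, PT (Hstar hs) p ->
    exists q h, PT_le (Hstar hs) q p /\ Hf h /\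
      forall k, forces_open (Hstar hs) q (cyl_covered (nu h k)).
Proof.
move=> p p_PT; set c := split_count (Hstar hs) p.
have [N HN] := split_count_unbounded p_PT (Hstar_finite hs).
have [h [Hh f_lt_h]] := Hdom (fun k => \max_(i < N k.*2.+2) hs i).
pose code z := take (hs (size z)) (nu h (c z)./2).
have hs_le_h z : p z -> hs (size z) <= h (c z)./2.
  move=> pz; have lt : size z < N (c z)./2.*2.+2.
    by rewrite ltnNge; apply/negP => /(HN _ _ pz); rewrite ltnNge -leq_half_double leqnn.
  apply: leq_trans (ltnW (f_lt_h _)).
  by rewrite (bigD1 (Ordinal lt)) //= leq_maxl.
have code_ok z : p z -> Hstar hs (size z) (code z).
  by move=> pz; rewrite /Hstar size_takel // Hnu // hs_le_h.
exists (prune (Hstar hs) p code), h; split; first by split; [apply: PT_prune | move=> e []].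
split=> // k r [r_PT r_prune]; exists r; split=> // g g_r x x_nu.
have [n [g_n c_n]] := prune_branch_code p_PT (Hstar_finite hs) k (fun n => r_prune _ (g_r n)).
exists n; move: (hs_le_h _ (proj1 (r_prune _ (g_r n)))); rewrite g_n /code /c c_n size_mkseq.
by rewrite -[(k.*2.+1)./2]/(uphalf k.*2) uphalf_double -(Hnu _ Hh) => le; apply: in_cyl_take.
Qed.
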